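(* Every $\mathrm{NP}_2$-irreducible digital image is $\mathrm{NP}_2$-rigid.
   Context: A digital image is a finite set $X\subset\mathbb{Z}^n$ with a reflexive symmetric adjacency relation (a finite reflexive graph); continuous maps send adjacent points to adjacent points. On products, $\mathrm{NP}_2$ declares two tuples adjacent iff coordinates are adjacent in at most 2 positions and equal elsewhere. An $\mathrm{NP}_2$-homotopy from $f$ to $g:X\to Y$ is an $\mathrm{NP}_2$-continuous $H:X\times[0,m]_{\mathbb{Z}}\to Y$ (interval with $a\sim b\iff|a-b|\le1$) with $H(\cdot,0)=f$, $H(\cdot,m)=g$; write $f\simeq_2 g$. $X,Y$ are $\mathrm{NP}_2$-homotopy equivalent if there are continuous $f:X\to Y$, $g:Y\to X$ with $g\circ f\simeq_2\mathrm{id}_X$, $f\circ g\simeq_2\mathrm{id}_Y$. $X$ is $\mathrm{NP}_2$-irreducible if it is not $\mathrm{NP}_2$-homotopy equivalent to a digital image with fewer points. $X$ is $\mathrm{NP}_2$-rigid if $\mathrm{id}_X$ is not $\mathrm{NP}_2$-homotopic to any map $X\to X$ other than itself. *)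

From mathcomp Require Import all_boot.
Set Implicit Arguments. Unset Strict Implicit. Unset Printing Implicit Defensive.

Record digimg := DigImg {
  pts :> finType;
  adj : rel pts;
  adj_refl : reflexive adj;
  adj_sym : symmetric adj
}.

Definition dcontinuous (X Y : digimg) (f : X -> Y) : Prop :=
  forall x x' : X, adj x x' -> adj (f x) (f x').

Definition iadj (a b : nat) : bool := (a <= b.+1) && (b <= a.+1).

(* NP_2 adjacency on X x [0,m]_Z: the product has 2 factors, so "adjacent in
   at most 2 coordinates and equal elsewhere" means adjacent in each coordinate. *)
Definition np2_adj (X : digimg) (p q : X * nat) : bool :=
  adj p.1 q.1 && iadj p.2 q.2.

(* NP_2-homotopy from f to g with m steps; H is given on X x nat and only its
   values on X x [0,m] matter. *)
Definition np2_homotopy (X Y : digimg) (f g : X -> Y) (m : nat)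
    (H : X -> nat -> Y) : Prop :=
  [/\ forall (x x' : X) (t t' : nat), t <= m -> t' <= m ->
        np2_adj (x, t) (x', t') -> adj (H x t) (H x' t'),
      forall x, H x 0 = f x
    & forall x, H x m = g x].

Definition np2_homotopic (X Y : digimg) (f g : X -> Y) : Prop :=
  exists m H, @np2_homotopy X Y f g m H.

Definition np2_htpy_equiv (X Y : digimg) : Prop :=
  exists (f : X -> Y) (g : Y -> X),
    [/\ dcontinuous f, dcontinuous g,
        np2_homotopic (fun x => g (f x)) id
      & np2_homotopic (fun y => f (g y)) id].

Definition np2_irreducible (X : digimg) : Prop :=
  forall Y : digimg, #|Y| < #|X| -> ~ np2_htpy_equiv X Y.

Definition np2_rigid (X : digimg) : Prop :=
  forall g : X -> X, np2_homotopic id g -> forall x, g x = x.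

From mathcomp Require Import all_boot.
Set Implicit Arguments. Unset Strict Implicit. Unset Printing Implicit Defensive.

(* If y != x and every neighbour of x is adjacent to y, folding x onto y is a
   one-step homotopy from the identity, so X is homotopy equivalent to X minus
   x; hence an irreducible image has no such pair.  Conversely, in a homotopy
   from the identity to a map g other than the identity, look at the first
   stage t at which some point z moves: stage t-1 is the identity, so every
   neighbour w of z, being adjacent to z at stage t-1, is adjacent to the image
   of z at stage t, and z is dominated by that image. *)

Definition dominates (X : digimg) (y x : X) : Prop :=
  y != x /\ forall z, adj x z -> adj z y.

Section InducedSubimage.
Variables (X : digimg) (P : pred X).

Definition sub_adj : rel {z : X | P z} := fun a b => adj (val a) (val b).

Lemma sub_adj_refl : reflexive sub_adj.
Proof. by move=> a; apply: adj_refl. Qed.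

Lemma sub_adj_sym : symmetric sub_adj.
Proof. by move=> a b; apply: adj_sym. Qed.

Definition subimg : digimg := DigImg sub_adj_refl sub_adj_sym.

Lemma card_subimg : #|subimg| = #|P|.
Proof. exact: card_sig. Qed.

Lemma val_subimg_continuous : dcontinuous (val : subimg -> X).
Proof. by []. Qed.

End InducedSubimage.

Lemma np2_homotopic_eq (X Y : digimg) (f g : X -> Y) :
  dcontinuous f -> f =1 g -> np2_homotopic f g.
Proof.
move=> fC fg; exists 0, (fun x _ => f x); split=> //.
by move=> x x' t t' _ _ /andP[xx' _]; apply: fC.
Qed.

Section FoldDominatedPoint.
Variables (X : digimg) (x y : X).
Hypothesis yDx : dominates y x.

Definition fold_point (z : X) : X := if z == x then y else z.

Lemma fold_point_neq z : fold_point z != x.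
Proof. by rewrite /fold_point; case: ifPn => // _; case: yDx. Qed.

Lemma adj_fold_pointl a b : adj a b -> adj (fold_point a) b.
Proof.
by rewrite /fold_point; case: eqP => // -> ab; rewrite adj_sym; case: yDx => _; apply.
Qed.

Lemma adj_fold_point_if (s s' : bool) a b : adj a b ->
  adj (if s then fold_point a else a) (if s' then fold_point b else b).
Proof.
move=> ab; have ab' : adj (if s then fold_point a else a) b.
  by case: s => //; apply: adj_fold_pointl.
case: s' => //; rewrite adj_sym; apply: adj_fold_pointl; by rewrite adj_sym.
Qed.

Definition punctured : digimg := subimg (predC1 x).

Definition retract_punctured (z : X) : punctured :=
  exist (fun z : X => predC1 x z) _ (fold_point_neq z).

Lemma card_punctured : #|punctured| < #|X|.
Proof. by rewrite card_subimg cardC1 ltn_predL; apply/card_gt0P; exists x. Qed.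

Lemma np2_htpy_equiv_punctured : np2_htpy_equiv X punctured.
Proof.
exists retract_punctured, val; split.
- by move=> a b ab; apply: (adj_fold_point_if true true).
- exact: val_subimg_continuous.
- exists 1, (fun z t => if t == 0 then fold_point z else z); split=> //.
  by move=> a b t t' _ _ /andP[ab _]; apply: adj_fold_point_if.
- apply: np2_homotopic_eq => [a b ab|[z zx]].
    exact: (adj_fold_point_if true true).
  by apply: val_inj; rewrite /= /fold_point (negbTE zx).
Qed.

End FoldDominatedPoint.

Lemma np2_irreducible_undominated (X : digimg) (x y : X) :
  np2_irreducible X -> ~ dominates y x.
Proof.
move=> irrX yDx.
exact: irrX _ (card_punctured x) (np2_htpy_equiv_punctured yDx).
Qed.

Lemma np2_homotopy_id_dominated (X : digimg) (g : X -> X) m H (x : X) :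
  np2_homotopy id g m H -> g x != x -> exists z w : X, dominates w z.
Proof.
move=> [HC H0 Hm] gx.
have moves : exists t, [exists z, H z t != z].
  by exists m; apply/existsP; exists x; rewrite Hm.
case: (ex_minnP moves) => t /existsP[z Hz] t_min.
have t_gt0 : 0 < t by case: t Hz {t_min} => //; rewrite H0 eqxx.
have t_le_m : t <= m by apply: t_min; apply/existsP; exists x; rewrite Hm.
have Hprev w : H w t.-1 = w.
  apply/eqP/negPn/negP => Hw.
  have := t_min t.-1 (introT existsP (ex_intro _ w Hw)).
  by rewrite leqNgt ltn_predL t_gt0.
exists z, (H z t); split; first by [].
move=> w zw; rewrite -{1}(Hprev w); apply: HC.
- exact: leq_trans (leq_pred t) t_le_m.
- exact: t_le_m.
- by rewrite /np2_adj /= adj_sym zw /iadj prednK // leqnn (leq_trans (leq_pred t)).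
Qed.

Theorem mainTheorem11 (X : digimg) : np2_irreducible X -> np2_rigid X.
Proof.
move=> irrX g [m [H HH]] x; apply/eqP/negPn/negP => gx.
have [z [w wDz]] := np2_homotopy_id_dominated HH gx.
exact: np2_irreducible_undominated irrX wDz.
Qed.
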